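(* Let $r>0$ and let $(X_t)_{t\ge0}$ be the Brownian motion with drift $X_t = X_0+B_t-rt$ ($B$ a standard Brownian motion started at $0$ independent of $X_0$), with $\tau_0:=\inf\{t\ge0:X_t=0\}$. If $\mu$ is a probability measure on $(0,+\infty)$ such that $\int_0^\infty x^3e^{rx}\mu(dx)<+\infty$, then for any $s\ge0$, $$\mathbb{E}_\mu\big[X_s^3e^{rX_s}\mid\tau_0>s\big]<+\infty.$$
   Context: $\mathbb{E}_\mu$ denotes expectation when $X_0\sim\mu$, and $\mathbb{E}_\mu[Z\mid\tau_0>s]=\mathbb{E}_\mu[Z\mathbf{1}_{\tau_0>s}]/\mathbb{P}_\mu(\tau_0>s)$. *)

From HB Require Import structures.
From mathcomp Require Import all_boot all_order all_algebra.
From mathcomp Require Import all_classical all_reals all_analysis.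
Set Implicit Arguments. Unset Strict Implicit. Unset Printing Implicit Defensive.
Import Order.TTheory GRing.Theory Num.Theory numFieldTopology.Exports numFieldNormedType.Exports.
Local Open Scope classical_set_scope.
Local Open Scope ring_scope.

Definition mutually_indep {d} {T : measurableType d} {R : realType}
  (P : probability T R) (n : nat) (Y : 'I_n -> T -> R) : Prop :=
  forall A : 'I_n -> set R, (forall i, measurable (A i)) ->
    P (\bigcap_(i in [set: 'I_n]) (Y i @^-1` A i))
    = (\prod_(i < n) fine (P (Y i @^-1` A i)))%:E.

Definition standard_BM {d} {T : measurableType d} {R : realType}
  (P : probability T R) (B : R -> T -> R) : Prop :=
  [/\ (forall w, B 0 w = 0),
      (forall w, {within [set t : R | 0 <= t], continuous (fun t : R => B t w)}),
      (forall t, 0 <= t -> measurable_fun [set: T] (B t)),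
      (* Gaussian increments: B t - B s ~ N(0, t - s) for 0 <= s < t (s = t excluded: normal_prob with s = 0 is not a Dirac) *)
      (forall s t, 0 <= s -> s < t -> forall A, measurable A ->
         P ((fun w => B t w - B s w) @^-1` A) = normal_prob 0 (Num.sqrt (t - s)) A)
    &
      (forall (n : nat) (tt : 'I_n.+1 -> R), 0 <= tt ord0 ->
         (forall i : 'I_n, tt (widen_ord (leqnSn n) i) <= tt (lift ord0 i)) ->
         mutually_indep P (fun i : 'I_n => fun w =>
            B (tt (lift ord0 i)) w - B (tt (widen_ord (leqnSn n) i)) w))].

Definition indep_of_process {d} {T : measurableType d} {R : realType}
  (P : probability T R) (X0 : T -> R) (B : R -> T -> R) : Prop :=
  forall (A : set R), measurable A ->
  forall (n : nat) (tt : 'I_n -> R) (C : 'I_n -> set R),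
    (forall i, 0 <= tt i) -> (forall i, measurable (C i)) ->
    let E := \bigcap_(i in [set: 'I_n]) (B (tt i) @^-1` C i) in
    P (X0 @^-1` A `&` E) = (fine (P (X0 @^-1` A)) * fine (P E))%:E.

(* tau_0 := inf {t >= 0 : X_t = 0} (in \bar R, inf of empty set = +oo). *)
Definition hit0 {T : Type} {R : realType} (X : R -> T -> R) (w : T) : \bar R :=
  ereal_inf [set t%:E | t in [set t : R | 0 <= t /\ X t w = 0]].

Definition cond_expect {d} {T : measurableType d} {R : realType}
  (P : probability T R) (Z : T -> R) (A : set T) : \bar R :=
  ((\int[P]_(w in A) (Z w)%:E) * ((fine (P A))^-1)%:E)%E.

(* On the event {tau_0 > s} we only use X_s <= X_0^+ + |B_s| (as r s >= 0), so
   the integrand x^3 e^(r x) at X_s is dominated by phi(X_0^+) phi(|B_s|) with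
   phi(z) = (1 + z)^3 e^(r z).  Since X_0 and B_s are independent, the
   expectation of this product factorises: the first factor is finite by the
   moment assumption on mu, the second because the centred Gaussian law of
   B_s has exponential moments of |y|.  Conditioning only multiplies by the
   constant P(tau_0 > s)^-1. *)

From HB Require Import structures.
From mathcomp Require Import all_boot all_order all_algebra.
From mathcomp Require Import all_classical all_reals all_analysis.
From mathcomp Require Import ring lra measurable_realfun.
Import Order.TTheory GRing.Theory Num.Theory.
Import numFieldTopology.Exports numFieldNormedType.Exports.
Local Open Scope classical_set_scope.
Local Open Scope ring_scope.

Section cube_expR.
Context {R : realType}.
Implicit Types r y z a c : R.

Definition cubexp_weight r z := (1 + z) ^+ 3 * expR (r * z).

Lemma cubexp_weight_ge0 r z : 0 <= z -> 0 <= cubexp_weight r z.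
Proof. by move=> z0; rewrite mulr_ge0 ?expR_ge0 ?exprn_ge0 ?addr_ge0. Qed.

Lemma exprn3_le_expR z : 0 <= z -> z ^+ 3 <= 27 * expR z.
Proof.
move=> z0; have z30 : 0 <= z / 3 by lra.
have le_z3 : z / 3 <= expR (z / 3) by have := expR_ge1Dx (z / 3); lra.
have -> : z = 3%:R * (z / 3) by field.
rewrite expRM_natl exprMn -natrX.
by rewrite ler_wpM2l // lerXn2r // ?nnegrE ?expR_ge0.
Qed.

Lemma cube_expR_le_weightM r y a c : 0 <= r -> 0 <= a -> 0 <= c -> y <= a + c ->
  Num.max (y ^+ 3 * expR (r * y)) 0 <= cubexp_weight r a * cubexp_weight r c.
Proof.
move=> r0 a0 c0 yac.
have [y0|y0] := lerP y 0.
  have y3 : y ^+ 3 <= 0 by rewrite exprS mulr_le0_ge0 ?sqr_ge0.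
  have y3e : y ^+ 3 * expR (r * y) <= 0 by rewrite mulr_le0_ge0 ?expR_ge0.
  by rewrite max_r // mulr_ge0 ?cubexp_weight_ge0.
have y3e : 0 <= y ^+ 3 * expR (r * y) by rewrite mulr_ge0 ?expR_ge0 ?exprn_ge0 ?ltW.
rewrite max_l // /cubexp_weight.
rewrite mulrACA -exprMn -expRD -mulrDr.
have y0' : 0 <= y by rewrite ltW.
rewrite ler_pM ?exprn_ge0 ?expR_ge0 //.
  by rewrite lerXn2r ?nnegrE ?mulr_ge0 ?addr_ge0 //; nra.
by rewrite ler_expR ler_wpM2l.
Qed.

Lemma cubexp_weight_le r a : 0 <= r -> 0 <= a ->
  cubexp_weight r a <= 8 * (a ^+ 3 * expR (r * a) + expR r).
Proof.
move=> r0 a0; rewrite /cubexp_weight mulrDr.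
have e0 := expR_gt0 (r * a).
have [a1|a1] := lerP a 1.
  have : (1 + a) ^+ 3 <= 2 ^+ 3 by rewrite lerXn2r ?nnegrE; lra.
  have : expR (r * a) <= expR r by rewrite ler_expR; nra.
  have : 0 <= a ^+ 3 * expR (r * a) by rewrite mulr_ge0 ?exprn_ge0 ?expR_ge0.
  have : 0 <= (1 + a) ^+ 3 by rewrite exprn_ge0 //; lra.
  have : (2 : R) ^+ 3 = 8 by rewrite !exprS expr0; lra.
  nra.
have : (1 + a) ^+ 3 <= (2 * a) ^+ 3 by rewrite lerXn2r ?nnegrE; lra.
rewrite exprMn (_ : (2 : R) ^+ 3 = 8); last by rewrite !exprS expr0; lra.
have := expR_gt0 r; nra.
Qed.

Lemma cubexp_weight_le_expR r c : 0 <= c ->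
  cubexp_weight r c <= 27 * expR 1 * expR ((r + 1) * c).
Proof.
move=> c0; have /exprn3_le_expR le_c3 : 0 <= 1 + c by lra.
rewrite expRD mulrA in le_c3.
rewrite /cubexp_weight [(r + 1) * c]mulrDl mul1r expRD [expR (r * c) * _]mulrC mulrA.
by rewrite ler_wpM2r ?expR_ge0.
Qed.

Lemma drift_cube_expR_le r (s x b : R) : 0 <= r -> 0 <= s ->
  Num.max ((x + b - r * s) ^+ 3 * expR (r * (x + b - r * s))) 0 <=
  cubexp_weight r (Num.max x 0) * cubexp_weight r `|b|.
Proof.
move=> r0 s0; apply: cube_expR_le_weightM => //; first by rewrite le_max lexx orbT.
have : x <= Num.max x 0 by rewrite le_max lexx.
have := ler_norm b; have : 0 <= r * s by rewrite mulr_ge0.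
lra.
Qed.

End cube_expR.

Lemma measurable_cubexp_weight {R : realType} (r : R) :
  measurable_fun setT (cubexp_weight r).
Proof.
apply: measurable_funM; first exact/measurable_funX/measurable_funD.
by apply: measurableT_comp => //; exact: measurable_funM.
Qed.

Section integral_majorant.
Local Open Scope ereal_scope.
Context d (T : measurableType d) (R : realType) (mu : {measure set T -> \bar R}).

(* [D] need not be measurable (the event {tau_0 > s} is not known to be): the
   bound goes through the supremum of simple functions defining the integral. *)
Lemma integral_le_ge0_majorant (D : set T) (f G : T -> \bar R) :
  (forall x, 0 <= G x) -> (forall x, D x -> f^\+ x <= G x) ->
  \int[mu]_(x in D) f x <= \int[mu]_x G x.
Proof.
move=> G0 fG; rewrite integralE.
apply: (@le_trans _ _ (\int[mu]_(x in D) f^\+ x)).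
  by rewrite -[leRHS]sube0 leeB // integral_ge0.
rewrite integral_mkcond ge0_integralTE; last first.
  by move=> x; rewrite /patch; case: ifP.
rewrite ge0_integralTE //; apply: ereal_sup_le => _ [h hle <-]; exists h => //.
move=> x; apply: (le_trans (hle x)); rewrite /patch; case: ifP => [/set_mem|_].
  exact: fG.
exact: G0.
Qed.

End integral_majorant.

Lemma integral_cubexp_weight_max0_lty {R : realType}
    (mu : {finite_measure set R -> \bar R}) (r : R) : 0 <= r ->
  (\int[mu]_(x in [set x : R | (0 < x)%R]) (x ^+ 3 * expR (r * x))%:E < +oo)%E ->
  (\int[mu]_x (cubexp_weight r (Num.max x 0))%:E < +oo)%E.
Proof.
move=> r0 mu_lty; set g := fun x : R => Num.max x 0.
have mg : measurable_fun setT g by exact: measurable_maxr.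
have g0 x : 0 <= g x by rewrite le_max lexx orbT.
have mh : measurable_fun setT (fun x => g x ^+ 3 * expR (r * g x)).
  apply: measurable_funM; first exact: measurable_funX.
  by apply: measurableT_comp => //; exact: measurable_funM.
have h0 x : 0 <= g x ^+ 3 * expR (r * g x) by rewrite mulr_ge0 ?exprn_ge0 ?expR_ge0.
have hE : (\int[mu]_x (g x ^+ 3 * expR (r * g x))%:E =
    \int[mu]_(x in [set x : R | (0 < x)%R]) (x ^+ 3 * expR (r * x))%:E)%E.
  rewrite [RHS]integral_mkcond; apply: eq_integral => x _; rewrite /patch /g.
  case: ifPn => [/set_mem /= x0|]; first by rewrite max_l // ltW.
  rewrite notin_setE /= => /negP; rewrite -leNgt => x0.
  by rewrite max_r // expr0n /= mul0r.
apply: (@le_lt_trans _ _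
    (\int[mu]_x (8 * (g x ^+ 3 * expR (r * g x) + expR r))%:E)%E).
  apply: ge0_le_integral => //.
  - by move=> x _; rewrite lee_fin cubexp_weight_ge0 ?g0.
  - apply/measurable_EFinP; exact: measurableT_comp (measurable_cubexp_weight r) mg.
  - exact/measurable_EFinP/measurable_funM/measurable_funD.
  - by move=> x _; rewrite lee_fin cubexp_weight_le ?g0.
under eq_integral do rewrite EFinM.
rewrite ge0_integralZl_EFin //; last 2 first.
- by move=> x _; rewrite lee_fin addr_ge0 ?expR_ge0.
- exact/measurable_EFinP/measurable_funD.
under eq_integral do rewrite EFinD.
rewrite ge0_integralD //; last 2 first.
- by move=> x _; rewrite lee_fin.
- exact/measurable_EFinP.
rewrite hE integral_cst // lte_mul_pinfty // lte_add_pinfty //.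
by rewrite lte_mul_pinfty ?lee_fin ?expR_ge0 // ltey_eq fin_num_measure.
Qed.

Section normal_exponential_moment.
Context {R : realType}.
Local Notation leb := (@lebesgue_measure R).

Lemma ge0_integral_normal_prob (m s : R) (f : R -> \bar R) :
  measurable_fun setT f -> (forall x, (0 <= f x)%E) ->
  (\int[normal_prob m s]_x f x = \int[leb]_x (f x * (normal_pdf m s x)%:E))%E.
Proof.
move=> mf f0; have dom := normal_prob_dominates m s.
rewrite -(Radon_Nikodym_SigmaFinite.change_of_variables dom f0 measurableT mf).
have rn_int : leb.-integrable setT (Radon_Nikodym_SigmaFinite.f (normal_prob m s) leb).
  exact: Radon_Nikodym_SigmaFinite.f_integrable.
have mpdf : measurable_fun setT (fun x => (normal_pdf m s x)%:E).
  by apply/measurable_EFinP; exact: measurable_normal_pdf.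
apply: ae_eq_integral => //.
- by apply: emeasurable_funM => //; exact: (measurable_int _ rn_int).
- exact: emeasurable_funM.
- apply: ae_eqe_mul2l; apply: integral_ae_eq => // E _ mE.
  by rewrite -(Radon_Nikodym_SigmaFinite.f_integral dom mE).
Qed.

(* Completing the square: [q|y| - y^2/(2s) <= q^2 s - y^2/(4s)]. *)
Lemma expR_norm_normal_pdf_le (s q y : R) : 0 < s ->
  expR (q * `|y|) * normal_pdf 0 (Num.sqrt s) y <=
  normal_peak (Num.sqrt s) / normal_peak (Num.sqrt (2 * s)) * expR (q ^+ 2 * s) *
  normal_pdf 0 (Num.sqrt (2 * s)) y.
Proof.
move=> s0; have s20 : 0 < 2 * s by rewrite mulr_gt0.
rewrite /normal_pdf !gt_eqF ?sqrtr_gt0 // /normal_fun !subr0.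
rewrite !sqr_sqrtr ?(ltW s0) ?(ltW s20) // -real_normK ?num_real //.
have p1_gt0 : 0 < normal_peak (Num.sqrt s).
  by rewrite normal_peak_gt0 // gt_eqF ?sqrtr_gt0.
have p2_gt0 : 0 < normal_peak (Num.sqrt (2 * s)).
  by rewrite normal_peak_gt0 // gt_eqF ?sqrtr_gt0.
set p1 := normal_peak _ in p1_gt0 *; set p2 := normal_peak _ in p2_gt0 *.
rewrite mulrCA [X in _ <= X](_ : _ = p1 * (expR (q ^+ 2 * s) *
  expR (- `|y| ^+ 2 / (2 * s *+ 2)))); last by field; rewrite gt_eqF.
rewrite ler_pM2l // -!expRD ler_expR -subr_ge0.
have -> : q ^+ 2 * s + - `|y| ^+ 2 / (2 * s *+ 2) - (q * `|y| + - `|y| ^+ 2 / (s *+ 2))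
    = (`|y| - 2 * q * s) ^+ 2 / (4 * s).
  by rewrite !mulr2n; field; lra.
by rewrite divr_ge0 ?sqr_ge0 // ltW // mulr_gt0.
Qed.

Lemma normal_prob_expR_norm_lty (s q : R) : 0 < s ->
  (\int[normal_prob 0 (Num.sqrt s)]_y (expR (q * `|y|))%:E < +oo)%E.
Proof.
move=> s0; have mK : measurable_fun setT (fun y : R => expR (q * `|y|)).
  by apply: measurableT_comp => //; apply: measurable_funM => //; exact: normr_measurable.
have mpdf t : measurable_fun setT (fun y => (normal_pdf 0 t y)%:E).
  by apply/measurable_EFinP; exact: measurable_normal_pdf.
rewrite ge0_integral_normal_prob; last 2 first.
- exact/measurable_EFinP.
- by move=> y; rewrite lee_fin expR_ge0.
pose C := normal_peak (Num.sqrt s) / normal_peak (Num.sqrt (2 * s)) * expR (q ^+ 2 * s).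
apply: (@le_lt_trans _ _
  (\int[leb]_y (C%:E * (normal_pdf 0 (Num.sqrt (2 * s)) y)%:E))%E).
  apply: ge0_le_integral => //.
  - by move=> y _; rewrite -EFinM lee_fin mulr_ge0 ?expR_ge0 ?normal_pdf_ge0.
  - by apply: emeasurable_funM; [exact/measurable_EFinP | exact: mpdf].
  - by apply: emeasurable_funM => //; exact: mpdf.
  - by move=> y _; rewrite -!EFinM lee_fin expR_norm_normal_pdf_le.
have C0 : 0 <= C by rewrite !mulr_ge0 ?invr_ge0 ?normal_peak_ge0 ?expR_ge0.
rewrite ge0_integralZl_EFin //.
- by rewrite integral_normal_pdf mule1 ltry.
- by move=> y _; rewrite lee_fin normal_pdf_ge0.
- exact: mpdf.
Qed.

End normal_exponential_moment.

Section independent_pair.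
Local Open Scope ereal_scope.
Context {R : realType} {d d1 d2 : measure_display} {T : measurableType d}
  {T1 : measurableType d1} {T2 : measurableType d2} {P : probability T R}
  {X : T -> T1} {Y : T -> T2}.
Hypotheses (mX : measurable_fun setT X) (mY : measurable_fun setT Y).
Context {mu : {sigma_finite_measure set T1 -> \bar R}}
  {nu : {sigma_finite_measure set T2 -> \bar R}}.
Hypothesis indepXY : forall A C, measurable A -> measurable C ->
  P (X @^-1` A `&` Y @^-1` C) = mu A * nu C.

Let mXY : measurable_fun setT (fun w => (X w, Y w)) := measurable_fun_pair mX mY.

Lemma ge0_integral_indep_pair (F : T1 * T2 -> \bar R) :
  measurable_fun setT F -> (forall z, 0 <= F z) ->
  \int[P]_w F (X w, Y w) = \int[mu \x nu]_z F z.
Proof.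
move=> mF F0.
have := ge0_integral_pushforward mXY P measurableT mF (fun z _ => F0 z).
rewrite preimage_setT => <-.
apply: eq_measure_integral => A mA _.
apply/esym; apply: (product_measure_unique (m' := pushforward P _)) => // A1 C mA1 mC.
Qed.

Lemma ge0_integral_indepM (H : T1 -> R) (K : T2 -> R) :
  measurable_fun setT H -> measurable_fun setT K ->
  (forall x, (0 <= H x)%R) -> (forall y, (0 <= K y)%R) ->
  \int[P]_w (H (X w) * K (Y w))%:E = \int[mu]_x (H x)%:E * \int[nu]_y (K y)%:E.
Proof.
move=> mH mK H0 K0; pose F z := (H z.1 * K z.2)%:E.
have mF : measurable_fun setT F.
  apply/measurable_EFinP; apply: measurable_funM.
    exact: measurableT_comp mH measurable_fst.
  exact: measurableT_comp mK measurable_snd.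
have F0 z : 0 <= F z by rewrite lee_fin mulr_ge0.
have inner x : fubini_F nu F x = (H x)%:E * \int[nu]_y (K y)%:E.
  rewrite /fubini_F /F /= -(ge0_integralZl_EFin nu measurableT) //.
  - by move=> y _; rewrite lee_fin.
  - exact/measurable_EFinP.
rewrite (ge0_integral_indep_pair _ mF F0) fubini_tonelli1 //.
under eq_integral => x _ do rewrite inner.
rewrite ge0_integralZr //.
- exact/measurable_EFinP.
- by move=> x _; rewrite lee_fin.
- by apply: integral_ge0 => y _; rewrite lee_fin.
Qed.

Lemma ge0_integral_indepM_lty (H : T1 -> R) (K : T2 -> R) :
  measurable_fun setT H -> measurable_fun setT K ->
  (forall x, (0 <= H x)%R) -> (forall y, (0 <= K y)%R) ->
  \int[mu]_x (H x)%:E < +oo -> \int[nu]_y (K y)%:E < +oo ->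
  \int[P]_w (H (X w) * K (Y w))%:E < +oo.
Proof.
move=> mH mK H0 K0 H_lty K_lty; rewrite ge0_integral_indepM //.
rewrite lte_mul_pinfty // ?ge0_fin_numE //.
all: by apply: integral_ge0 => x _; rewrite lee_fin.
Qed.

End independent_pair.

Lemma expR_moment_cubexp_weight_lty {R : realType}
    (nu : {measure set (measurableTypeR R) -> \bar R}) (r : R) :
  (\int[nu]_y (expR ((r + 1) * `|y|))%:E < +oo)%E ->
  (\int[nu]_y (cubexp_weight r `|y|)%:E < +oo)%E.
Proof.
move=> nu_lty; have mnorm : measurable_fun setT (fun y : R => `|y|).
  exact: normr_measurable.
have mexp : measurable_fun setT (fun y : R => expR ((r + 1) * `|y|)).
  by apply: measurableT_comp => //; exact: measurable_funM.
apply: (@le_lt_trans _ _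
  (\int[nu]_y ((27 * expR 1)%:E * (expR ((r + 1) * `|y|))%:E))%E).
  apply: ge0_le_integral => //.
  - by move=> y _; rewrite lee_fin cubexp_weight_ge0.
  - exact/measurable_EFinP/(measurableT_comp (measurable_cubexp_weight r)).
  - exact/measurable_EFinP/measurable_funM.
  - by move=> y _; rewrite -EFinM lee_fin cubexp_weight_le_expR.
rewrite ge0_integralZl_EFin ?lte_mul_pinfty ?mulr_ge0 ?expR_ge0 //.
exact/measurable_EFinP.
Qed.

Section brownian_motion.
Context {R : realType} {d} {T : measurableType d} {P : probability T R}
  {B : R -> T -> R}.

Lemma indep_of_process_rect (X0 : T -> R) (t : R) :
  measurable_fun setT X0 -> measurable_fun setT (B t) ->
  indep_of_process P X0 B -> 0 <= t ->
  forall A C, measurable A -> measurable C ->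
  P (X0 @^-1` A `&` B t @^-1` C) = (P (X0 @^-1` A) * P (B t @^-1` C))%E.
Proof.
move=> mX0 mBt indep t0 A C mA mC.
have := indep A mA 1 (fun=> t) (fun=> C) (fun=> t0) (fun=> mC); cbv zeta.
rewrite bigcap_const; last by exists ord0.
move=> ->; rewrite EFinM !fineK //; apply: fin_num_measure.
- by rewrite -[X in measurable X]setTI; exact: mBt.
- by rewrite -[X in measurable X]setTI; exact: mX0.
Qed.

(* The law lives on [measurableTypeR R], where [normal_prob] is defined: same
   measurable sets as [R], but a different display. *)
Lemma standard_BM_expR_moment (q s : R) : standard_BM P B -> 0 <= s ->
  exists nu : probability (measurableTypeR R) R,
    (forall C, measurable C -> P (B s @^-1` C) = nu C) /\
    (\int[nu]_y (expR (q * `|y|))%:E < +oo)%E.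
Proof.
move=> [B0 _ _ gauss _]; rewrite le_eqVlt => /predU1P[<-|s_gt0].
  exists \d_(0 : measurableTypeR R); split.
    move=> C mC; rewrite /= diracE; have [C0|C0] := boolP (0 \in C).
      rewrite [X in P X](_ : _ = setT) ?probability_setT //.
      by apply/seteqP; split => // w _; rewrite /preimage /= B0; exact/set_mem.
    rewrite [X in P X](_ : _ = set0) ?measure0 //.
    apply/seteqP; split => // w; rewrite /preimage /= B0 => /mem_set C0'.
    by rewrite C0' in C0.
  rewrite integral_dirac //= ?diracT ?mul1e ?normr0 ?mulr0 ?expR0 ?ltry //.
  apply/measurable_EFinP/measurableT_comp => //.
  by apply: measurable_funM => //; exact: normr_measurable.
exists (normal_prob 0 (Num.sqrt s)); split; last exact: normal_prob_expR_norm_lty.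
move=> C mC; have law_Bs := gauss 0 s (lexx 0) s_gt0 C mC; rewrite subr0 in law_Bs.
rewrite (_ : B s @^-1` C = (fun w => B s w - B 0 w) @^-1` C); first exact: law_Bs.
by apply/funext => w; rewrite /preimage /= B0 subr0.
Qed.

End brownian_motion.

Theorem lemma4p2 (R : realType) (d : measure_display) (T : measurableType d)
  (P : probability T R) (r : R) (B : R -> T -> R) (X0 : T -> R)
  (mu : probability R R) :
  0 < r ->
  standard_BM P B ->
  measurable_fun [set: T] X0 ->
  indep_of_process P X0 B ->
  (forall A : set R, measurable A -> P (X0 @^-1` A) = mu A) ->
  mu [set x : R | (0 < x)%R] = 1%E ->
  (\int[mu]_(x in [set x : R | (0 < x)%R]) (x ^+ 3 * expR (r * x))%:E < +oo)%E ->
  let X := fun (t : R) (w : T) => X0 w + B t w - r * t in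
  forall s : R, 0 <= s ->
    (cond_expect P (fun w => (X s w ^+ 3 * expR (r * X s w))%R)
       [set w | (s%:E < hit0 X w)%E] < +oo)%E.
Proof.
move=> r_gt0 BM mX0 indep lawX0 _ mu_lty X s s0; have r0 := ltW r_gt0.
have [_ _ mB _ _] := BM.
have mBs : measurable_fun setT (B s : T -> measurableTypeR R) := mB s s0.
have [nu [lawBs nu_lty]] := standard_BM_expR_moment (r + 1) s BM s0.
have law_pair E (C : set (measurableTypeR R)) : measurable E -> measurable C ->
    P (X0 @^-1` E `&` B s @^-1` C) = (mu E * nu C)%E.
  by move=> mE mC; rewrite indep_of_process_rect // lawX0 // lawBs.
have max0_ge0 (x : R) : 0 <= Num.max x 0 by rewrite le_max lexx orbT.
pose H (x : R) := cubexp_weight r (Num.max x 0).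
pose K (y : R) := cubexp_weight r `|y|.
have int_le : (\int[P]_(w in [set w | (s%:E < hit0 X w)%E])
    (X s w ^+ 3 * expR (r * X s w))%:E <= \int[P]_w (H (X0 w) * K (B s w))%:E)%E.
  apply: integral_le_ge0_majorant => [w|w _].
    by rewrite lee_fin mulr_ge0 ?cubexp_weight_ge0 ?max0_ge0.
  by rewrite funeposE -EFin_max lee_fin drift_cube_expR_le.
rewrite /cond_expect muleC lte_mul_pinfty ?lee_fin ?invr_ge0 ?fine_ge0 ?measure_ge0 //.
apply: le_lt_trans int_le _; apply: (ge0_integral_indepM_lty mX0 mBs law_pair).
- exact: measurableT_comp (measurable_cubexp_weight r) (measurable_maxr _ _).
- by apply: measurableT_comp (measurable_cubexp_weight r) _; exact: normr_measurable.
- by move=> x; rewrite cubexp_weight_ge0 ?max0_ge0.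
- by move=> y; rewrite cubexp_weight_ge0.
- exact: integral_cubexp_weight_max0_lty.
- exact: expR_moment_cubexp_weight_lty.
Qed.
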